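(* Let $C=\{c_1,\dots,c_m\}$ and let $\mathcal{T}=\mathrm{CP}(c_1,\dots,c_m)$. Given a vote $v$ over $C$, let $\widehat{v}$ be the vote over $C$ such that, for each $j\in[m]$, if $c_j$ is ranked in position $i$ in $v$, then $c_i$ is ranked in position $m-j+1$ in $\widehat{v}$. If $v$ is in the support of $\mathcal{D}_{\mathrm{GS}}^{\mathcal{T}}$, then $\widehat{v}$ is single-peaked with respect to the axis $c_1\lhd c_2\lhd\dots\lhd c_m$.
   Context: A vote over $C$ is a total order on $C$ (position 1 is the top). $\mathrm{CP}(c_1,\dots,c_m)$ is the rooted ordered binary caterpillar tree with internal nodes $x_1,\dots,x_{m-1}$ (root $x_1$), where for $j\in[m-2]$ node $x_j$ has left child $c_j$ and right child $x_{j+1}$, and $x_{m-1}$ has children $c_{m-1}$ (left) and $c_m$ (right). A vote is consistent with $\mathcal{T}$ if it equals the left-to-right order of leaves of the tree obtained by reversing the order of children of some set of internal nodes; $\mathcal{D}_{\mathrm{GS}}^{\mathcal{T}}$ is the uniform distribution over votes consistent with $\mathcal{T}$, so its support is the set of consistent votes. A vote $v$ is single-peaked with respect to an axis (a linear order $\lhd$ of $C$) if for every $t\in[m]$ the $t$ top-ranked candidates of $v$ form an interval of $\lhd$. *)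

From mathcomp Require Import all_boot all_fingroup.
Set Implicit Arguments. Unset Strict Implicit. Unset Printing Implicit Defensive.

Inductive btree (A : Type) : Type :=
| Leaf of A
| Node of btree A & btree A.
Arguments Leaf {A}.
Arguments Node {A}.

Inductive leaf_order {A : Type} : btree A -> seq A -> Prop :=
| lo_leaf a : leaf_order (Leaf a) [:: a]
| lo_keep l r sl sr : leaf_order l sl -> leaf_order r sr ->
    leaf_order (Node l r) (sl ++ sr)
| lo_swap l r sl sr : leaf_order l sl -> leaf_order r sr ->
    leaf_order (Node l r) (sr ++ sl).

(* Caterpillar CP(c_1, ..., c_m): x_j has left child c_j and right child
   x_{j+1}; x_{m-1} has children c_{m-1}, c_m. *)
Fixpoint cp_aux {A : Type} (a : A) (s : seq A) : btree A :=
  match s with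
  | [::] => Leaf a
  | b :: s' => Node (Leaf a) (cp_aux b s')
  end.
Definition caterpillar {A : Type} (c : seq A) : option (btree A) :=
  match c with [::] => None | a :: s => Some (cp_aux a s) end.

(* A vote over candidates 'I_m (candidate c_{j+1} is the ordinal j) is a
   bijection from positions (0-based, position 0 = top) to candidates. *)
Definition vote_seq (m : nat) (v : {perm 'I_m}) : seq 'I_m :=
  [seq v i | i <- enum 'I_m].

(* Consistency with a tree; the support of D_GS^T is the set of such votes. *)
Definition consistent (m : nat) (T : btree 'I_m) (v : {perm 'I_m}) : Prop :=
  leaf_order T (vote_seq v).

Definition is_interval (T : eqType) (axis : seq T) (S : pred T) : Prop :=
  exists i k, forall x, S x = (x \in take k (drop i axis)).

Definition single_peaked (T : eqType) (axis vote : seq T) : Prop :=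
  forall t, t <= size vote -> is_interval axis (fun x => x \in take t vote).

(* A vote consistent with CP(c_1, ..., c_m) is obtained from one consistent
   with CP(c_2, ..., c_m) by putting c_1 at the top or at the bottom, so for
   every n the candidates c_n, ..., c_m occupy a block of consecutive
   positions.  By construction of \hat v, its top t candidates are the
   positions at which v ranks c_{m-t+1}, ..., c_m; under the identification
   of positions with the axis c_1 < ... < c_m this block is an interval. *)

From mathcomp Require Import all_boot all_fingroup.
From mathcomp Require Import zify.

Set Implicit Arguments.
Unset Strict Implicit.
Unset Printing Implicit Defensive.

Section CaterpillarLeafOrders.

Variable A : eqType.

Fixpoint leaves (t : btree A) : seq A :=
  match t with
  | Leaf a => [:: a]
  | Node l r => leaves l ++ leaves r
  end.

Lemma perm_leaf_order (t : btree A) (s : seq A) :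
  leaf_order t s -> perm_eq s (leaves t).
Proof.
elim=> //= l r sl sr _ IHl _ IHr; last rewrite perm_catC; exact: perm_cat.
Qed.

Lemma leaves_cp_aux (a : A) (l : seq A) : leaves (cp_aux a l) = a :: l.
Proof. by elim: l a => //= b l IHl a; rewrite IHl. Qed.

Lemma leaf_order_cp_auxS (a b : A) (l s : seq A) :
  leaf_order (cp_aux a (b :: l)) s ->
  exists2 s', leaf_order (cp_aux b l) s' & s = a :: s' \/ s = rcons s' a.
Proof.
move=> lo_s; inversion lo_s as [|? ? sa s' lo_a lo_s'|? ? sa s' lo_a lo_s'];
  subst; inversion lo_a; subst; exists s' => //.
all: by [left | right; rewrite cats1].
Qed.

Lemma suffix_block_cp_aux (x0 a : A) (l s : seq A) (n : nat) :
  uniq (a :: l) -> leaf_order (cp_aux a l) s ->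
  exists i k, i + k <= size s /\ forall idx, idx < size s ->
    (nth x0 s idx \in drop n (a :: l)) = (i <= idx < i + k).
Proof.
elim: l a s n => [|b l IHl] a s n /=.
  move=> _ lo_s; inversion lo_s; subst.
  case: n => [|n].
    by exists 0, 1; split=> // -[|idx] //= _; rewrite mem_head.
  by exists 0, 0; split=> // idx; rewrite andbF; case: idx.
case/andP=> a_notin_bl uniq_bl lo_s.
have s_perm : perm_eq s [:: a, b & l].
  by rewrite -(leaves_cp_aux a (b :: l)); exact: perm_leaf_order lo_s.
case: n => [|n].
  exists 0, (size s); split=> // idx lt_idx.
  by rewrite drop0 lt_idx -(perm_mem s_perm) mem_nth.
have a_notin : a \notin drop n (b :: l).
  by apply: contra a_notin_bl; apply: mem_drop.
have [s' lo_s' [->| ->]] := leaf_order_cp_auxS lo_s;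
  have [i [k [le_ik block]]] := IHl _ _ n uniq_bl lo_s'.
- exists i.+1, k; split=> [|[|idx] lt_idx] /=; first lia.
    by rewrite (negbTE a_notin).
  exact: block.
- exists i, k; rewrite size_rcons; split=> [|idx]; first lia.
  rewrite ltnS leq_eqVlt nth_rcons => /predU1P[->|lt_idx].
    by rewrite ltnn eqxx (negbTE a_notin); lia.
  by rewrite lt_idx block.
Qed.

End CaterpillarLeafOrders.

Lemma mem_drop_enum_ord (m n : nat) (x : 'I_m) :
  (x \in drop n (enum 'I_m)) = (n <= x).
Proof.
rewrite -(mem_map val_inj) map_drop val_enum_ord drop_iota mem_iota.
by case: x => x /= ltxm; lia.
Qed.

Lemma mem_take_drop_enum_ord (m i k : nat) (x : 'I_m) :
  (x \in take k (drop i (enum 'I_m))) = (i <= x < i + k).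
Proof.
rewrite -(mem_map val_inj) map_take map_drop val_enum_ord drop_iota take_iota.
by rewrite mem_iota; case: x => x /= ltxm; lia.
Qed.

Lemma nth_vote_seq (m : nat) (v : {perm 'I_m}) (x0 x : 'I_m) :
  nth x0 (vote_seq v) x = v x.
Proof. by rewrite (nth_map x) ?size_enum_ord // nth_ord_enum. Qed.

Lemma mem_take_vote_seq_rev (m t : nat) (v w : {perm 'I_m}) (x : 'I_m) :
  (forall i, w (rev_ord (v i)) = i) ->
  (x \in take t (vote_seq w)) = (m - t <= v x).
Proof.
move=> wvK; rewrite in_take; last by rewrite -(wvK x) map_f ?mem_enum.
rewrite -{1}(wvK x) index_map ?index_enum_ord /=; last exact: perm_inj.
by have := ltn_ord (v x); lia.
Qed.

Theorem theorem3 (m : nat) (T : btree 'I_m) (v w : {perm 'I_m}) :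
  2 <= m ->
  caterpillar (enum 'I_m) = Some T ->
  consistent T v ->
  (forall i j : 'I_m, v i = j -> w (rev_ord j) = i) ->
  single_peaked (enum 'I_m) (vote_seq w).
Proof.
move=> _ + lo_v hat_vw t _.
have wvK x : w (rev_ord (v x)) = x by exact: hat_vw.
case enum_m: (enum 'I_m) => [|a l] //= [T_cp]; subst T.
have uniq_al : uniq (a :: l) by rewrite -enum_m enum_uniq.
have [i [k [_ block]]] := suffix_block_cp_aux a (m - t) uniq_al lo_v.
exists i, k => x.
rewrite -enum_m mem_take_drop_enum_ord (mem_take_vote_seq_rev _ _ wvK).
rewrite -mem_drop_enum_ord -(nth_vote_seq v a) enum_m block //.
by rewrite size_map size_enum_ord.
Qed.
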